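(* Let $n\ge3$ and let $G$ be a connected graph with at least two vertices, and assume it is not the case that both $G\cong K_2$ and $n=3$. Then $G\times K_n$ is super edge connected if and only if $n\,\kappa'(G)>\delta(G)$.
   Context: All graphs are finite, simple and undirected. $\kappa'(G)$ denotes edge connectivity and $\delta(G)$ minimum degree. The direct product $G\times H$ has vertex set $V(G)\times V(H)$. Two vertices $(x,u),(y,v)$ are adjacent if and only if $xy\in E(G)$ and $uv\in E(H)$. A minimum edge cut of a graph is a set of edges whose removal disconnects the graph and whose cardinality equals its edge connectivity. A graph is super edge connected if every minimum edge cut is the set of all edges incident with some single vertex. *)

From HB Require Import structures.
From mathcomp Require Import all_boot.
Set Implicit Arguments. Unset Strict Implicit. Unset Printing Implicit Defensive.

Definition simple_graph (T : finType) (e : rel T) : Prop :=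
  symmetric e /\ irreflexive e.

Definition connected (T : finType) (e : rel T) : Prop :=
  forall x y : T, connect e x y.

Definition edges (T : finType) (e : rel T) : {set {set T}} :=
  [set [set p.1; p.2] | p in [set p : T * T | e p.1 p.2]].

Definition remove_edges (T : finType) (e : rel T) (F : {set {set T}}) : rel T :=
  fun x y => e x y && ([set x; y] \notin F).

Definition edge_cut (T : finType) (e : rel T) (F : {set {set T}}) : Prop :=
  F \subset edges e /\ ~ connected (remove_edges e F).

Definition edge_conn (T : finType) (e : rel T) : nat :=
  \big[minn/#|edges e|]_(F : {set {set T}} |
       (F \subset edges e) && [exists x, exists y, ~~ connect (remove_edges e F) x y])
     #|F|.

Definition deg (T : finType) (e : rel T) (v : T) : nat := #|[set w | e v w]|.
Definition min_deg (T : finType) (e : rel T) : nat :=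
  \big[minn/#|T|]_(v : T) deg e v.

Definition min_edge_cut (T : finType) (e : rel T) (F : {set {set T}}) : Prop :=
  edge_cut e F /\ #|F| = edge_conn e.

Definition incident (T : finType) (e : rel T) (v : T) : {set {set T}} :=
  [set [set v; w] | w in [set w | e v w]].

Definition super_edge_connected (T : finType) (e : rel T) : Prop :=
  forall F, min_edge_cut e F -> exists v, F = incident e v.

Definition complete (n : nat) : rel 'I_n := fun i j => i != j.

Definition direct_prod (T U : finType) (e : rel T) (f : rel U) : rel (T * U) :=
  fun p q => e p.1 q.1 && f p.2 q.2.

Definition graph_iso (T U : finType) (e : rel T) (f : rel U) : Prop :=
  exists g : T -> U, bijective g /\ forall x y, f (g x) (g y) = e x y.
Arguments complete n : clear implicits.

(* Write S_x for the fibre of a vertex set S of G x K_n over x in V(G). Every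
   edge xy of G contributes to the edge boundary of S the pairs (i, j), i != j,
   with [i \in S_x] != [j \in S_y]: at least n - 1 of them if S_x is a proper
   nonempty subset, at least n if S_x and S_y both are (n >= 4), and none only if
   S_x = S_y is empty or full.  Summing over the edges of G, a set S with a proper
   fibre at x0 and |dS| <= (n - 1) delta(G) makes every estimate tight; the tight
   configuration propagates along G and forces |S| <= 1, |V \ S| <= 1, or
   G = K_2 with n = 3.  If no fibre is proper then S = X x K_n and
   |dS| = n (n - 1) |d_G X| >= n (n - 1) kappa'(G), which beats
   kappa'(G x K_n) <= (n - 1) delta(G) as soon as n kappa'(G) > delta(G).
   Conversely, if n kappa'(G) <= delta(G), the lift of a minimum edge cut of G is
   a minimum edge cut of G x K_n that is not the star of a vertex. *)

From mathcomp Require Import all_boot all_order zify.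
Set Implicit Arguments. Unset Strict Implicit. Unset Printing Implicit Defensive.
Import Order.TTheory.

Lemma bigminn_le (I : finType) (P : pred I) (F : I -> nat) x j :
  P j -> \big[minn/x]_(i | P i) F i <= F j.
Proof. by move=> Pj; rewrite -minEnat -leEnat; exact: bigmin_le_cond. Qed.

Lemma bigminn_attained (I : finType) (P : pred I) (F : I -> nat) x j :
  P j -> (forall i, P i -> F i <= x) -> exists2 i, P i & \big[minn/x]_(i | P i) F i = F i.
Proof.
move=> Pj Fx; rewrite -minEnat.
by have [i Pi ->] := eq_bigmin j P F Pj (fun i Pi => Fx i Pi : (F i <= x)%O); exists i.
Qed.

Lemma card_sum_mem (I : finType) (A : {set I}) : #|A| = \sum_i (i \in A : nat).
Proof. by rewrite -sum1_card big_mkcond; apply: eq_bigr => i _; case: (i \in A). Qed.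

Lemma card_pair_set (I J : finType) (b : I -> J -> bool) :
  #|[set p : I * J | b p.1 p.2]| = \sum_i \sum_j (b i j : nat).
Proof. by rewrite card_sum_mem pair_bigA; apply: eq_bigr => -[i j] _; rewrite inE. Qed.

Lemma sum_pair (I J : finType) (G : I * J -> nat) :
  \sum_u G u = \sum_i \sum_j G (i, j).
Proof. by rewrite pair_bigA; apply: eq_bigr => -[]. Qed.

Lemma eq_of_leq_sum (I : finType) (E1 E2 : I -> nat) :
  (forall i, E1 i <= E2 i) -> \sum_i E2 i <= \sum_i E1 i -> E1 =1 E2.
Proof.
move=> le12 le21 i.
have [_ eq_sum] := leqif_sum (P := predT) (C := fun i => E1 i == E2 i)
  (fun i _ => leqif_eq (le12 i)).
have : \sum_i E1 i == \sum_i E2 i by rewrite eqn_leq le21 andbT leq_sum.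
by rewrite eq_sum => /forallP /(_ i) /eqP.
Qed.

Lemma sum_split_sym (I : finType) (h : I -> I -> nat) x0 :
  (forall x y, h x y = h y x) -> h x0 x0 = 0 ->
  \sum_x \sum_y h x y = 2 * \sum_y h x0 y + \sum_(x | x != x0) \sum_(y | y != x0) h x y.
Proof.
move=> h_sym h00; rewrite (bigD1 x0) //= mul2n -addnn -addnA; congr (_ + _).
rewrite (eq_bigr (fun x => h x x0 + \sum_(y | y != x0) h x y)); last first.
  by move=> x _; rewrite (bigD1 x0).
rewrite big_split /=; congr (_ + _).
by rewrite [RHS](bigD1 x0) //= h00 add0n; apply: eq_bigr => x _.
Qed.

Lemma connectedPn (W : finType) (r : rel W) : ~ connected r -> exists x y, ~~ connect r x y.
Proof.
move=> not_conn; have : ~~ [forall x, forall y, connect r x y].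
  by apply/negP => /forallP all_conn; apply: not_conn => x y; exact: (forallP (all_conn x)).
by rewrite negb_forall => /existsP[x]; rewrite negb_forall => /existsP[y]; exists x, y.
Qed.

Lemma exists_neq (T : finType) : 1 < #|T| -> forall x : T, exists y, y != x.
Proof.
move=> /card_gt1P[a [b [_ _ ab]]] x.
by have [ax|] := eqVneq a x; [exists b; rewrite -ax eq_sym | exists a].
Qed.

Section Graph.
Variables (W : finType) (r : rel W).
Implicit Types (x y v w : W) (S : {set W}) (F : {set {set W}}).

Lemma connected_neighbour x : connected r -> 1 < #|W| -> exists y, r x y.
Proof.
move=> conn /exists_neq/(_ x)[y yx].
have /connectP[[|z p] xp yE] := conn x y; first by rewrite yE eqxx in yx.
by exists z; case/andP: xp.
Qed.

Lemma exists_min_deg : 0 < #|W| -> exists v, deg r v = min_deg r.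
Proof.
case/card_gt0P => x _.
have [v _ minE] := @bigminn_attained W xpredT (deg r) #|W| x isT (fun v _ => max_card _).
by exists v; rewrite /min_deg minE.
Qed.

Lemma min_deg_le v : min_deg r <= deg r v.
Proof. exact: bigminn_le. Qed.

Lemma deg_sum v : deg r v = \sum_w (r v w : nat).
Proof. by rewrite /deg card_sum_mem; apply: eq_bigr => w _; rewrite inE. Qed.

Definition crossing_pairs (S : {set W}) : {set W * W} :=
  [set p | r p.1 p.2 && (p.1 \in S) && (p.2 \notin S)].

Definition edge_boundary (S : {set W}) : {set {set W}} :=
  [set [set p.1; p.2] | p in crossing_pairs S].

Lemma card_crossing_pairs S :
  #|crossing_pairs S| = \sum_x \sum_y (r x y && (x \in S) && (y \notin S) : nat).
Proof. exact: (card_pair_set (fun x y => r x y && (x \in S) && (y \notin S))). Qed.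

Lemma card_edge_boundary S : #|edge_boundary S| = #|crossing_pairs S|.
Proof.
apply: card_in_imset => -[a b] [c d]; rewrite !inE /=.
move=> /andP[/andP[_ aS] bS] /andP[/andP[_ cS] dS] E.
have /set2P[ac|ad] : a \in [set c; d] by rewrite -E set21.
2: by move: dS; rewrite -ad aS.
have /set2P[bc|->] : b \in [set c; d] by rewrite -E set22.
  by move: bS; rewrite bc cS.
by rewrite ac.
Qed.

Lemma edge_boundary_sub S : edge_boundary S \subset edges r.
Proof. by apply: imsetS; apply/subsetP => p; rewrite !inE => /andP[/andP[-> _] _]. Qed.

Lemma edge_boundary_disconnects S x y : x \in S -> y \notin S ->
  ~~ connect (remove_edges r (edge_boundary S)) x y.
Proof.
move=> xS yS; apply/negP => /connectP[p xp yE].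
suff : last x p \in S by rewrite -yE (negbTE yS).
elim: p x xS xp {yE} => [|z p IHp] w wS //= /andP[/andP[rwz wz_out] zp].
apply: IHp zp; apply: contraNT wz_out => zS.
by apply/imsetP; exists (w, z); rewrite // !inE rwz wS zS.
Qed.

Lemma mem_edge_boundary S a b : symmetric r ->
  ([set a; b] \in edge_boundary S) = r a b && ((a \in S) != (b \in S)).
Proof.
move=> r_sym; apply/imsetP/andP => [[[c d]]|[rab]].
  rewrite inE /= => cross E; move: (set21 c d) (set22 c d) cross.
  rewrite -E => /set2P[]-> /set2P[]-> /andP[/andP[rcd cS] dS].
  - by rewrite cS in dS.
  - by rewrite rcd cS (negbTE dS).
  - by rewrite r_sym rcd cS (negbTE dS).
  - by rewrite cS in dS.
case: (boolP (a \in S)) => aS /= bS.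
  by exists (a, b); rewrite // inE /= rab aS; move: bS; case: (b \in S).
exists (b, a); last exact: setUC.
by rewrite inE /= r_sym rab aS andbT; move: bS; case: (b \in S).
Qed.

Lemma edge_boundary_setC S : symmetric r -> edge_boundary (~: S) = edge_boundary S.
Proof.
move=> r_sym; apply/setP => E; apply/imsetP/imsetP => -[[a b]];
  rewrite !inE /= => /andP[/andP[rab aS] bS] ->; exists (b, a); try exact: setUC.
- by move: bS; rewrite !inE /= negbK r_sym rab aS andbT.
- by rewrite !inE /= r_sym rab aS bS.
Qed.


Lemma crossing_pairs_set1 v : irreflexive r ->
  crossing_pairs [set v] = pair v @: [set w | r v w].
Proof.
move=> r_irr; apply/setP => -[a b]; rewrite !inE /=; apply/idP/imsetP.
  by move=> /andP[/andP[rab /eqP av] _]; exists b; rewrite ?inE -?av.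
move=> [w]; rewrite inE => rvw [-> ->]; rewrite rvw eqxx /=.
by apply: contraTneq rvw => ->; rewrite r_irr.
Qed.

Lemma edge_boundary_set1 v : irreflexive r -> edge_boundary [set v] = incident r v.
Proof.
by move=> r_irr; rewrite /edge_boundary crossing_pairs_set1 // -imset_comp.
Qed.

Lemma card_edge_boundary_set1 v : irreflexive r -> #|edge_boundary [set v]| = deg r v.
Proof.
move=> r_irr; rewrite card_edge_boundary crossing_pairs_set1 // card_imset //.
by move=> a b [].
Qed.

Lemma edge_conn_le F x y : F \subset edges r -> ~~ connect (remove_edges r F) x y ->
  edge_conn r <= #|F|.
Proof.
move=> sF xy; apply: bigminn_le; rewrite sF.
by apply/existsP; exists x; apply/existsP; exists y.
Qed.

Lemma edge_conn_le_boundary S x y : x \in S -> y \notin S ->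
  edge_conn r <= #|edge_boundary S|.
Proof.
by move=> xS yS; apply: edge_conn_le (edge_boundary_sub S) (edge_boundary_disconnects xS yS).
Qed.

Lemma edge_conn_le_deg v w : irreflexive r -> w != v -> edge_conn r <= deg r v.
Proof.
move=> r_irr wv; rewrite -card_edge_boundary_set1 //.
by apply: (@edge_conn_le_boundary _ v w); rewrite inE.
Qed.

Lemma edges_disconnect x y : x != y -> ~~ connect (remove_edges r (edges r)) x y.
Proof.
move=> xy; apply/negP => /connectP[[|z p] /= xp yE]; first by rewrite yE eqxx in xy.
case/andP: xp; rewrite /remove_edges => /andP[rxz /negP xz_out] _; apply: xz_out.
by apply/imsetP; exists (x, z); rewrite // inE.
Qed.

Lemma exists_min_edge_cut x y : x != y -> exists F, min_edge_cut r F.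
Proof.
move=> xy; pose P F := (F \subset edges r) &&
  [exists x, exists y, ~~ connect (remove_edges r F) x y].
have cut_edges : P (edges r).
  by rewrite /P subxx; apply/existsP; exists x; apply/existsP; exists y; apply: edges_disconnect.
have [F /andP[sF /existsP[a /existsP[b ab]]] cardF] :=
  @bigminn_attained _ P (fun F => #|F|) _ _ cut_edges (fun F PF => subset_leq_card (proj1 (andP PF))).
exists F; split; last by rewrite /edge_conn cardF.
by split=> // conn; move: ab; rewrite conn.
Qed.

Lemma boundary_min_edge_cut S x y : x \in S -> y \notin S ->
  #|edge_boundary S| <= edge_conn r -> min_edge_cut r (edge_boundary S).
Proof.
move=> xS yS small; split; last by apply/eqP; rewrite eqn_leq small (edge_conn_le_boundary xS yS).
split; first exact: edge_boundary_sub.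
by move=> conn; move: (edge_boundary_disconnects xS yS); rewrite conn.
Qed.

Lemma min_edge_cut_boundary F : min_edge_cut r F ->
  exists S x y, [/\ x \in S, y \notin S & F = edge_boundary S].
Proof.
move=> [[sF /connectedPn[x [y xy]]] cardF].
pose S := [set z | connect (remove_edges r F) x z].
have boundary_sub : edge_boundary S \subset F.
  apply/subsetP => E /imsetP[[a b]]; rewrite !inE /= => /andP[/andP[rab xa] xb] ->.
  apply: contraNT xb => abF; apply: connect_trans xa (connect1 _).
  by rewrite /remove_edges rab abF.
exists S, x, y; split; rewrite ?inE ?connect0 //.
apply/esym/eqP; rewrite eqEcard boundary_sub cardF.
by apply: (@edge_conn_le_boundary _ x y); rewrite inE ?connect0.
Qed.

Lemma edge_boundary_small_side S x y : symmetric r -> irreflexive r ->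
  x \in S -> y \notin S -> (#|S| <= 1) || (#|~: S| <= 1) ->
  exists v, edge_boundary S = incident r v.
Proof.
move=> r_sym r_irr xS yS /orP[small|small].
  have /cards1P[v ->] : #|S| == 1 by rewrite eqn_leq small card_gt0; apply/set0Pn; exists x.
  by exists v; rewrite edge_boundary_set1.
have /cards1P[v Sv] : #|~: S| == 1.
  by rewrite eqn_leq small card_gt0; apply/set0Pn; exists y; rewrite inE.
by exists v; rewrite -edge_boundary_setC // Sv edge_boundary_set1.
Qed.

Lemma super_edge_connected_deg x y : irreflexive r -> x != y ->
  super_edge_connected r -> exists v, edge_conn r = deg r v.
Proof.
move=> r_irr xy super; have [F minF] := exists_min_edge_cut xy.
have [v Fv] := super F minF; exists v; case: minF => _ <-.
by rewrite Fv -edge_boundary_set1 // card_edge_boundary_set1.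
Qed.

End Graph.

Lemma graph_iso_K2 (T : finType) (e : rel T) x y : symmetric e -> irreflexive e ->
  e x y -> (forall z, (z == x) || (z == y)) -> graph_iso e (complete 2).
Proof.
move=> e_sym e_irr exy xy_all; have yx : (y == x) = false.
  by apply/negbTE; apply: contraTneq exy => ->; rewrite e_irr.
pose g z : 'I_2 := if z == x then ord0 else ord_max.
pose h (i : 'I_2) : T := if val i == 0 then x else y.
have gK : cancel g h.
  by move=> z; rewrite /g /h; case/orP: (xy_all z) => /eqP->; rewrite ?yx ?eqxx.
have hK : cancel h g.
  by move=> i; rewrite /h /g; case: i => -[|[|]] //= ?; rewrite ?yx ?eqxx; apply: val_inj.
exists g; split; first by exists h.
move=> a b; case/orP: (xy_all a) => /eqP->; case/orP: (xy_all b) => /eqP->;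
  by rewrite /g ?yx ?eqxx /complete ?e_irr ?(e_sym y x) ?exy.
Qed.

Lemma crossed_products_ge n x y : 3 <= n -> 0 < x + y -> x + y <= n ->
  n.-1 + x + y <= x * (n - y) + (n - x) * y.
Proof.
move=> n3 xy0 xyn; have [s ns] : exists s, n = x + y + s by exists (n - (x + y)); lia.
have -> : n - y = x + s by lia.
have -> : n - x = y + s by lia.
by have [x1|x1] := leqP x 1; have [y1|y1] := leqP y 1; nia.
Qed.

Lemma crossed_products_gt n x y : 4 <= n -> 0 < x -> 0 < y -> x + y <= n ->
  n + x + y <= x * (n - y) + (n - x) * y.
Proof.
move=> n4 x0 y0 xyn; have [s ns] : exists s, n = x + y + s by exists (n - (x + y)); lia.
have -> : n - y = x + s by lia.
have -> : n - x = y + s by lia.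
by have [x1|x1] := leqP x 1; have [y1|y1] := leqP y 1; nia.
Qed.

Definition partial (I : finType) (A : {set I}) := (A != set0) && (A != setT).

Lemma setC_eq0 (I : finType) (A : {set I}) : (~: A == set0) = (A == setT).
Proof. by rewrite -setCT (inj_eq (@setC_inj _)). Qed.

Lemma setC_eqT (I : finType) (A : {set I}) : (~: A == setT) = (A == set0).
Proof. by rewrite -setC0 (inj_eq (@setC_inj _)). Qed.

Lemma partial_setC (I : finType) (A : {set I}) : partial (~: A) = partial A.
Proof. by rewrite /partial setC_eq0 setC_eqT andbC. Qed.

Section CrossCount.
Variable n : nat.
Implicit Types A B : {set 'I_n}.

(* The number of edges of [G x K_n] leaving [S] between the fibres [A] and [B]
   of [S] over the two ends of an edge of [G]. *)
Definition cross_count A B :=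
  #|[set ij : 'I_n * 'I_n | (ij.1 != ij.2) && ((ij.1 \in A) != (ij.2 \in B))]|.

Lemma cross_count_sum A B :
  cross_count A B = \sum_i \sum_j ((i != j) && ((i \in A) != (j \in B)) : nat).
Proof. exact: (card_pair_set (fun i j => (i != j) && ((i \in A) != (j \in B)))). Qed.

Lemma cross_countC A B : cross_count A B = cross_count B A.
Proof.
rewrite !cross_count_sum exchange_big; apply: eq_bigr => i _; apply: eq_bigr => j _.
by rewrite eq_sym; case: (i \in B); case: (j \in A).
Qed.

Lemma cross_count_setC A B : cross_count (~: A) (~: B) = cross_count A B.
Proof.
rewrite !cross_count_sum; apply: eq_bigr => i _; apply: eq_bigr => j _.
by rewrite !inE; case: (i \in A); case: (j \in B).
Qed.

Lemma cross_count_formula A B :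
  cross_count A B + #|A :\: B| + #|B :\: A| = #|A| * #|~: B| + #|~: A| * #|B|.
Proof.
have diagE : #|A :\: B| + #|B :\: A| =
    \sum_i \sum_j ((i == j) && ((i \in A) != (j \in B)) : nat).
  rewrite !card_sum_mem -big_split /=; apply: eq_bigr => i _.
  rewrite (bigD1 i) //= eqxx big1 /=; last by move=> j /negbTE; rewrite eq_sym => ->.
  by rewrite !inE addn0; case: (i \in A); case: (i \in B).
have allE : #|A| * #|~: B| + #|~: A| * #|B| =
    \sum_i \sum_j (((i \in A) != (j \in B)) : nat).
  rewrite !card_sum_mem !big_distrl /= -big_split /=; apply: eq_bigr => i _.
  rewrite !big_distrr -big_split /=; apply: eq_bigr => j _.
  by rewrite !inE; case: (i \in A); case: (j \in B).
rewrite -addnA diagE allE cross_count_sum -big_split /=; apply: eq_bigr => i _.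
rewrite -big_split /=; apply: eq_bigr => j _.
by case: (i == j); case: ((i \in A) != (j \in B)).
Qed.

Lemma card_setC_ord A : #|~: A| = n - #|A|.
Proof. by rewrite cardsCs setCK card_ord. Qed.

Lemma cross_count_ge A B : 3 <= n -> partial A -> n.-1 <= cross_count A B.
Proof.
move=> n3; wlog small : A B / #|A| + #|B| <= n => [hwlog pA|/andP[A0 _]].
  have [|large] := leqP (#|A| + #|B|) n; first by move=> ?; apply: hwlog.
  rewrite -cross_count_setC; apply: hwlog; last by rewrite partial_setC.
  by rewrite !card_setC_ord; lia.
have A_pos : 0 < #|A| by rewrite card_gt0.
have := cross_count_formula A B; rewrite !card_setC_ord.
have := crossed_products_ge n3 (ltn_addr #|B| A_pos) small.
have : #|A :\: B| <= #|A| by rewrite subset_leq_card // subsetDl.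
have : #|B :\: A| <= #|B| by rewrite subset_leq_card // subsetDl.
move: (_ * (n - _) + _); lia.
Qed.

Lemma cross_count_gt A B : 4 <= n -> partial A -> partial B -> n.-1 < cross_count A B.
Proof.
move=> n4; wlog small : A B / #|A| + #|B| <= n => [hwlog pA pB|/andP[A0 _] /andP[B0 _]].
  have [|large] := leqP (#|A| + #|B|) n; first by move=> ?; apply: hwlog.
  rewrite -cross_count_setC; apply: hwlog; rewrite ?partial_setC //.
  by rewrite !card_setC_ord; lia.
have := cross_count_formula A B; rewrite !card_setC_ord.
have A_pos : 0 < #|A| by rewrite card_gt0.
have B_pos : 0 < #|B| by rewrite card_gt0.
have := crossed_products_gt n4 A_pos B_pos small.
have : #|A :\: B| <= #|A| by rewrite subset_leq_card // subsetDl.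
have : #|B :\: A| <= #|B| by rewrite subset_leq_card // subsetDl.
move: (_ * (n - _) + _); lia.
Qed.

Lemma cross_count_set0 A : cross_count A set0 = #|A| * n.-1.
Proof.
have := cross_count_formula A set0.
rewrite setD0 set0D cards0 setC0 cardsT card_ord muln0; nia.
Qed.

Lemma cross_count_setT A : cross_count A setT = #|~: A| * n.-1.
Proof. by rewrite -cross_count_setC setCT cross_count_set0. Qed.

Lemma cross_count_eq0 A B : 3 <= n -> cross_count A B = 0 -> ~~ partial A /\ B = A.
Proof.
move=> n3 cross0; have [pA|npA] := boolP (partial A).
  by have := cross_count_ge B n3 pA; rewrite cross0; lia.
have n1 : n.-1 != 0 by rewrite -lt0n; lia.
split=> //; move: npA cross0; rewrite negb_and !negbK cross_countC => /orP[]/eqP->.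
  by rewrite cross_count_set0 => /eqP; rewrite muln_eq0 (negbTE n1) orbF cards_eq0 => /eqP.
rewrite cross_count_setT => /eqP; rewrite muln_eq0 (negbTE n1) orbF cards_eq0 setC_eq0.
by move/eqP.
Qed.

End CrossCount.

Section DirectProduct.
Variables (T U : finType) (e : rel T) (f : rel U).

Lemma direct_prod_sym : symmetric e -> symmetric f -> symmetric (direct_prod e f).
Proof. by move=> e_sym f_sym [x i] [y j]; rewrite /direct_prod /= e_sym f_sym. Qed.

Lemma direct_prod_irr : irreflexive e -> irreflexive (direct_prod e f).
Proof. by move=> e_irr [x i]; rewrite /direct_prod /= e_irr. Qed.

Lemma deg_direct_prod x i : deg (direct_prod e f) (x, i) = deg e x * deg f i.
Proof.
rewrite /deg -cardsX; apply: eq_card => -[y j].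
by rewrite !inE.
Qed.

Definition lift (X : {set T}) : {set T * U} := [set u | u.1 \in X].

Lemma card_crossing_pairs_lift X :
  #|crossing_pairs (direct_prod e f) (lift X)| =
  #|crossing_pairs e X| * #|[set ij : U * U | f ij.1 ij.2]|.
Proof.
rewrite -cardsX.
pose shuffle (p : (T * T) * (U * U)) := ((p.1.1, p.2.1), (p.1.2, p.2.2)).
have shuffle_inj : injective shuffle by move=> [[a b] [c d]] [[? ?] [? ?]] [-> -> -> ->].
rewrite -(card_imset _ shuffle_inj); apply: eq_card => -[[x i] [y j]].
rewrite !inE /direct_prod /=; apply/idP/imsetP.
  move=> /andP[/andP[/andP[exy fij] xX] yX].
  by exists ((x, y), (i, j)); rewrite // !inE /= exy xX yX fij.
move=> [[[a b] [c d]]]; rewrite !inE /= => /andP[/andP[/andP[eab aX] bX] fcd].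
by move=> [-> -> -> ->]; rewrite eab fcd aX bX.
Qed.

End DirectProduct.

Lemma complete_sym n : symmetric (complete n).
Proof. by move=> i j; rewrite /complete eq_sym. Qed.

Lemma deg_complete n (i : 'I_n) : deg (complete n) i = n.-1.
Proof.
rewrite /deg -[n in n.-1]card_ord -(cardsC1 i); apply: eq_card => j.
by rewrite !inE /complete eq_sym.
Qed.

Lemma card_arcs_complete n : #|[set ij : 'I_n * 'I_n | complete n ij.1 ij.2]| = n * n.-1.
Proof.
rewrite card_pair_set (eq_bigr (fun _ => n.-1)) ?sum_nat_const ?card_ord //.
by move=> i _; rewrite -(deg_complete i) deg_sum.
Qed.

Lemma exists_ord_neq2 n (j k : 'I_n) : 3 <= n -> exists l, (l != j) && (l != k).
Proof.
move=> n3; apply/existsP; apply: contraTT n3 => /existsPn none; rewrite -leqNgt.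
have : #|[set: 'I_n]| <= #|[set j; k]|.
  apply/subset_leq_card/subsetP => l _; rewrite !inE.
  by have := none l; rewrite negb_and !negbK.
by rewrite cardsT card_ord cards2 => /leq_trans; apply; case: (j != k).
Qed.

Section ProductWithComplete.
Variables (T : finType) (e : rel T) (n : nat).
Hypotheses (e_sym : symmetric e) (e_irr : irreflexive e) (e_conn : connected e).
Hypothesis n3 : 3 <= n.
Local Notation P := (direct_prod e (complete n)).
Implicit Types (x y z : T) (S : {set T * 'I_n}).

Let P_sym : symmetric P := direct_prod_sym e_sym (@complete_sym n).
Let P_irr : irreflexive P := direct_prod_irr (complete n) e_irr.

Definition fiber S x : {set 'I_n} := [set i | (x, i) \in S].

Lemma fiber_setC S x : fiber (~: S) x = ~: fiber S x.
Proof. by apply/setP => i; rewrite !inE. Qed.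

Lemma double_card_crossing_pairs S :
  2 * #|crossing_pairs P S| =
  \sum_x \sum_y e x y * cross_count (fiber S x) (fiber S y).
Proof.
rewrite mul2n -addnn -{1}card_edge_boundary -edge_boundary_setC // card_edge_boundary.
rewrite !card_crossing_pairs -big_split /=.
rewrite (eq_bigr (fun u => \sum_v (P u v && ((u \in S) != (v \in S)) : nat))); last first.
  move=> u _; rewrite -big_split /=; apply: eq_bigr => v _.
  by rewrite !inE; case: (P u v); case: (u \in S); case: (v \in S).
rewrite sum_pair; apply: eq_bigr => x _.
under eq_bigr do rewrite sum_pair.
rewrite exchange_big /=; apply: eq_bigr => y _.
rewrite cross_count_sum big_distrr /=; apply: eq_bigr => i _.
rewrite big_distrr /=; apply: eq_bigr => j _.
by rewrite /direct_prod /complete /= !inE; case: (e x y); rewrite ?mul1n ?mul0n.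
Qed.

(* Equality throughout the estimate of [double_card_crossing_pairs] around [x0]. *)
Definition tight S x0 : Prop :=
  [/\ deg e x0 = min_deg e,
      forall y, e x0 y -> cross_count (fiber S x0) (fiber S y) = n.-1 &
      forall x y, x != x0 -> y != x0 -> e x y -> cross_count (fiber S x) (fiber S y) = 0].

Lemma tight_of_small_boundary S x0 : partial (fiber S x0) ->
  #|crossing_pairs P S| <= n.-1 * min_deg e -> tight S x0.
Proof.
move=> px0 small.
pose h x y := e x y * cross_count (fiber S x) (fiber S y).
have := double_card_crossing_pairs S; rewrite -/h (@sum_split_sym _ h x0); first last.
- by rewrite /h e_irr.
- by move=> x y; rewrite /h e_sym cross_countC.
set Q := \sum_y h x0 y; set R := \sum_(x | x != x0) _ => sumE.
(* 2 Q + R = 2 |dS| <= 2 (n - 1) delta <= 2 (n - 1) deg x0 <= 2 Q forces R = 0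
   and equality in every term of Q. *)
have h_ge y : e x0 y * n.-1 <= h x0 y.
  by rewrite /h; case: (e x0 y); rewrite ?mul1n ?mul0n // cross_count_ge.
have Q_ge : n.-1 * deg e x0 <= Q.
  by rewrite deg_sum big_distrr /=; apply: leq_sum => y _; rewrite mulnC h_ge.
have deg_ge : n.-1 * min_deg e <= n.-1 * deg e x0 by rewrite leq_mul2l min_deg_le orbT.
have n1 : 0 < n.-1 by lia.
have /andP[/eqP R0 /eqP Q_eq] : (R == 0) && (Q == n.-1 * deg e x0).
  move: sumE small Q_ge deg_ge; move: (n.-1 * _) (n.-1 * _) => M N; lia.
split.
- apply/eqP; rewrite eqn_leq min_deg_le -(leq_pmul2l n1).
  by move: sumE small Q_ge; rewrite Q_eq; lia.
- move=> y ex0y; have := @eq_of_leq_sum _ _ _ h_ge.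
  rewrite -big_distrl /= -deg_sum mulnC -Q_eq leqnn => /(_ isT y).
  by rewrite /h ex0y !mul1n.
- move=> x y xx0 yx0 exy; move/eqP: R0; rewrite sum_nat_eq0 => /forallP/(_ x).
  by rewrite xx0 sum_nat_eq0 => /forallP/(_ y); rewrite yx0 /h exy mul1n => /eqP.
Qed.

Lemma tight_setC S x0 : tight S x0 -> tight (~: S) x0.
Proof.
case=> deg_x0 nbr far; split=> // [y ex0y|x y xx0 yx0 exy];
  rewrite !fiber_setC cross_count_setC; [exact: nbr | exact: far].
Qed.

Lemma tight_fibers S x0 z : tight S x0 -> z != x0 ->
  exists2 y, e x0 y & (z == y) || ~~ partial (fiber S y) && (fiber S z == fiber S y).
Proof.
case=> _ _ far zx0.
pose near := [pred u | (u == x0) || [exists y, e x0 y &&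
  ((u == y) || ~~ partial (fiber S y) && (fiber S u == fiber S y))]].
suff : z \in near by rewrite /near inE (negbTE zx0) => /existsP[y /andP[]]; exists y.
have step w u : e w u -> w \in near -> u \in near.
  move=> ewu; have [->|ux0] := eqVneq u x0; first by rewrite /near !inE eqxx.
  have [wx0 _|wx0] := eqVneq w x0.
    by rewrite /near !inE; apply/orP; right; apply/existsP; exists u; rewrite -wx0 ewu eqxx.
  have [npw uw] := cross_count_eq0 n3 (far _ _ wx0 ux0 ewu).
  rewrite /near !inE (negbTE wx0) (negbTE ux0) /= => /existsP[y /andP[ex0y wy]].
  apply/existsP; exists y; rewrite ex0y uw /=.
  by case/orP: wy => [/eqP | /andP[_ /eqP]] <-; rewrite npw eqxx orbT.
have near_closed : closed e near.
  by move=> w u ewu; apply/idP/idP; apply: step; rewrite // e_sym.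
by rewrite -(closed_connect near_closed (e_conn x0 z)) /near !inE eqxx.
Qed.

Lemma tight_partial_neighbour S x0 y : tight S x0 -> e x0 y -> partial (fiber S y) ->
  min_deg e <= 1.
Proof.
case=> _ _ far ex0y py; apply: leq_trans (min_deg_le e y) _.
rewrite /deg -(cards1 x0); apply: subset_leq_card; apply/subsetP => z.
rewrite !inE => eyz; apply: contraTT py => zx0.
have yx0 : y != x0 by apply: contraTneq ex0y => ->; rewrite e_irr.
by have [] := cross_count_eq0 n3 (far _ _ yx0 zx0 eyz).
Qed.

Lemma tight_empty_neighbour S x0 y0 : tight S x0 -> partial (fiber S x0) ->
  e x0 y0 -> fiber S y0 = set0 -> #|S| <= 1.
Proof.
move=> tS px0 ex0y0 fy0; have [deg_x0 nbr _] := tS.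
have n1 : 0 < n.-1 by lia.
have card_x0 : #|fiber S x0| = 1.
  by apply/eqP; rewrite -(eqn_pmul2r n1) mul1n -cross_count_set0 -fy0 nbr.
have no_full y : e x0 y -> fiber S y != setT.
  move=> ex0y; apply/eqP => fyT; have := nbr y ex0y.
  rewrite fyT cross_count_setT card_setC_ord card_x0 => /eqP.
  by rewrite -{2}[n.-1]mul1n eqn_pmul2r //; lia.
have no_partial y : e x0 y -> ~~ partial (fiber S y).
  move=> ex0y; apply/negP => py; have := tight_partial_neighbour tS ex0y py.
  rewrite -deg_x0 leqNgt => /negP; apply; apply/card_gt1P; exists y0, y.
  rewrite !inE ex0y0 ex0y; split=> //; apply: contraTneq py => <-.
  by rewrite /partial fy0 eqxx.
have empty z : z != x0 -> fiber S z = set0.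
  move=> zx0; have [y ex0y zy] := tight_fibers tS zx0.
  have fy : fiber S y = set0.
    move: (no_partial y ex0y); rewrite /partial negb_and !negbK => /orP[/eqP //|/eqP fyT].
    by move: (no_full y ex0y); rewrite fyT eqxx.
  by case/orP: zy => [/eqP-> //|/andP[_ /eqP->]].
have sub : S \subset pair x0 @: fiber S x0.
  apply/subsetP => -[z i] zi; have [zx0|zx0] := eqVneq z x0.
    by apply/imsetP; exists i; rewrite ?inE -?zx0.
  by move: (empty z zx0) => /setP/(_ i); rewrite !inE zi.
by rewrite -card_x0; apply: leq_trans (subset_leq_card sub) (leq_imset_card _ _).
Qed.

Lemma tight_partial_K2 S x0 : 1 < #|T| -> tight S x0 -> partial (fiber S x0) ->
  1 < #|S| -> 1 < #|~: S| -> graph_iso e (complete 2) /\ n = 3.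
Proof.
move=> T2 tS px0 S2 C2; have [deg_x0 nbr _] := tS.
have nbr_partial y : e x0 y -> partial (fiber S y).
  move=> ex0y; apply/andP; split; apply/eqP => fy.
    by have := tight_empty_neighbour tS px0 ex0y fy; rewrite leqNgt S2.
  have fy' : fiber (~: S) y = set0 by rewrite fiber_setC fy setCT.
  have px0' : partial (fiber (~: S) x0) by rewrite fiber_setC partial_setC.
  by have := tight_empty_neighbour (tight_setC tS) px0' ex0y fy'; rewrite leqNgt C2.
have all_nbr z : z != x0 -> e x0 z.
  move=> zx0; have [y ex0y /orP[/eqP-> //|/andP[]]] := tight_fibers tS zx0.
  by rewrite nbr_partial.
have [y1 y1x0] := exists_neq T2 x0.
have ex0y1 := all_nbr y1 y1x0.
have deg1 : deg e x0 <= 1.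
  by rewrite deg_x0 (tight_partial_neighbour tS ex0y1 (nbr_partial _ ex0y1)).
have only2 z : (z == x0) || (z == y1).
  have [//|zx0 /=] := eqVneq z x0; apply: contraTT deg1 => zy1; rewrite -ltnNge.
  by apply/card_gt1P; exists z, y1; rewrite !inE all_nbr.
split; first exact: graph_iso_K2 e_sym e_irr ex0y1 only2.
apply/eqP; rewrite eqn_leq n3 andbT leqNgt; apply/negP => n4.
by have := cross_count_gt n4 px0 (nbr_partial _ ex0y1); rewrite nbr // ltnn.
Qed.

Lemma lift_of_trivial_fibers S : (forall x, ~~ partial (fiber S x)) ->
  S = lift 'I_n [set x | fiber S x == setT].
Proof.
move=> trivial; apply/setP => -[x i]; rewrite !inE /=.
have -> : ((x, i) \in S) = (i \in fiber S x) by rewrite inE.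
move: (trivial x); rewrite /partial negb_and !negbK => /orP[]/eqP->.
  by rewrite inE; apply/esym/eqP => /setP/(_ i); rewrite !inE.
by rewrite inE eqxx.
Qed.

Lemma crossing_pairs_gt S : 1 < #|T| -> ~ (graph_iso e (complete 2) /\ n = 3) ->
  min_deg e < n * edge_conn e -> 1 < #|S| -> 1 < #|~: S| ->
  n.-1 * min_deg e < #|crossing_pairs P S|.
Proof.
move=> T2 not_K2_3 deg_lt S2 C2; rewrite ltnNge; apply/negP => small.
have [/existsP[x0 px0]|/existsPn trivial] := boolP [exists x, partial (fiber S x)].
  by apply: not_K2_3; apply: tight_partial_K2 T2 (tight_of_small_boundary px0 small) px0 S2 C2.
set X := [set x | fiber S x == setT]; have SX := lift_of_trivial_fibers trivial.
have [[x i] Su] : exists u, u \in S by apply/card_gt0P; apply: ltnW.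
have [[y j] Cv] : exists v, v \in ~: S by apply/card_gt0P; apply: ltnW.
have xX : x \in X by move: Su; rewrite SX inE.
have yX : y \notin X by move: Cv; rewrite inE SX inE.
move: small; rewrite SX card_crossing_pairs_lift card_arcs_complete -card_edge_boundary.
have := edge_conn_le_boundary e xX yX; move: #|edge_boundary e X| => b conn_le.
have n1 : 0 < n.-1 by lia.
nia.
Qed.

(* With the edge (y0, j)(z, k), a lifted boundary also contains (y0, l)(z, k)
   for any third index l, which is not incident with (y0, j). *)
Lemma lift_boundary_not_incident X v : 1 < #|T| ->
  edge_boundary P (lift 'I_n X) != incident P v.
Proof.
case: v => y0 j T2; apply/eqP => bdE.
have [z ey0z] := connected_neighbour y0 e_conn T2.
have [k /andP[kj _]] := exists_ord_neq2 j j n3.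
have [l /andP[lj lk]] := exists_ord_neq2 j k n3.
have edge_jk : [set (y0, j); (z, k)] \in edge_boundary P (lift 'I_n X).
  rewrite bdE; apply/imsetP; exists (z, k) => //.
  by rewrite inE /direct_prod /complete /= ey0z eq_sym kj.
have : [set (y0, l); (z, k)] \in edge_boundary P (lift 'I_n X).
  move: edge_jk; rewrite !mem_edge_boundary // !inE /direct_prod /complete /= ey0z lk.
  by case/andP.
rewrite bdE => /imsetP[w _ lk_E]; have := set21 (y0, j) w; rewrite -lk_E.
by case/set2P => -[]; [move=> jl; rewrite jl eqxx in lj | move=> _ jk; rewrite jk eqxx in kj].
Qed.

Lemma card_prod_gt1 : 1 < #|T| -> 1 < #|{: T * 'I_n}|.
Proof. by rewrite card_prod card_ord; nia. Qed.

Lemma edge_conn_prod_le : 1 < #|T| -> edge_conn P <= n.-1 * min_deg e.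
Proof.
move=> T2; have [x0 deg_x0] := exists_min_deg e (ltnW T2).
pose i0 : 'I_n := Ordinal (ltnW (ltnW n3)).
have [u ux0] := exists_neq (card_prod_gt1 T2) (x0, i0).
rewrite -deg_x0 mulnC -(deg_complete i0) -deg_direct_prod.
exact: edge_conn_le_deg P_irr ux0.
Qed.

Lemma min_deg_lt_of_super : 1 < #|T| -> super_edge_connected P ->
  min_deg e < n * edge_conn e.
Proof.
move=> T2 super; rewrite ltnNge; apply/negP => conn_le_deg.
have /card_gt1P[x0 [x1 [_ _ x01]]] := T2.
have [F minF] := exists_min_edge_cut e x01.
have [X [x [y [xX yX FE]]]] := min_edge_cut_boundary minF.
have /card_gt1P[u [w [_ _ uw]]] := card_prod_gt1 T2.
have [[y0 j] connE] := super_edge_connected_deg P_irr uw super.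
have xu : (x, j) \in lift 'I_n X by rewrite inE.
have yu : (y, j) \notin lift 'I_n X by rewrite inE.
have lift_min : #|edge_boundary P (lift 'I_n X)| <= edge_conn P.
  rewrite connE card_edge_boundary card_crossing_pairs_lift card_arcs_complete.
  rewrite deg_direct_prod deg_complete -card_edge_boundary -FE.
  case: minF => _ ->; rewrite mulnA leq_mul2r mulnC.
  by rewrite (leq_trans conn_le_deg (min_deg_le e y0)) orbT.
have [v bdE] := super _ (boundary_min_edge_cut xu yu lift_min).
by move/eqP: bdE; apply/negP; apply: lift_boundary_not_incident.
Qed.

Lemma super_of_min_deg_lt : 1 < #|T| -> ~ (graph_iso e (complete 2) /\ n = 3) ->
  min_deg e < n * edge_conn e -> super_edge_connected P.
Proof.
move=> T2 not_K2_3 deg_lt F minF.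
have [S [a [b [aS bS FE]]]] := min_edge_cut_boundary minF.
rewrite FE; apply: edge_boundary_small_side P_sym P_irr aS bS _.
case: leqP => //= S2; case: leqP => // C2.
have := crossing_pairs_gt T2 not_K2_3 deg_lt S2 C2.
by rewrite -card_edge_boundary -FE; case: minF => _ ->; rewrite ltnNge edge_conn_prod_le.
Qed.

End ProductWithComplete.

Theorem corollary2 (T : finType) (e : rel T) (n : nat) :
  simple_graph e -> connected e -> 2 <= #|T| -> 3 <= n ->
  ~ (graph_iso e (complete 2) /\ n = 3) ->
  (super_edge_connected (direct_prod e (complete n))
   <-> min_deg e < n * edge_conn e).
Proof.
move=> [e_sym e_irr] e_conn T2 n3 not_K2_3; split.
  exact: min_deg_lt_of_super.
exact: super_of_min_deg_lt.
Qed.
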